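(* Let $G$ be an influence graph that is a directed line on nodes $\{1,\dots,n\}$ with edges $(i+1,i)$ for $i=1,\dots,n-1$ (so node $i$ is the $(i-1)$-th predecessor of node $1$). For each $i$ let $p_i=\prod_{j=1}^{i-1}p_{(j+1,j)}$ be the probability that node $i$ reaches node $1$ in the live-edge graph (so $p_1=1$), and set $p_{n+1}=0$. Then for every $(x_1,\dots,x_n)\in[0,1]^n$ and every $i\in\{1,\dots,n\}$, $$f^{+}_1(x_1,\dots,x_n)\le\sum_{j=1}^{i}x_jp_j+p_{i+1}.$$
   Context: IC model: each edge $e$ has probability $p_e\in[0,1]$; a realization (live-edge graph) $\phi$ contains each edge independently with probability $p_e$, with distribution $\mathcal{P}$. $\Gamma(S,\phi)$ is the set of nodes reachable from $S$ in $\phi$. Full-adoption feedback: selecting $u$ as a seed reveals the status of all out-going edges of every node reachable from $u$ in $\phi$. An adaptive policy $\pi$ maps the observations so far (seeds selected and their feedback) to the next node to select; $V(\pi,\phi)$ is its seed set under $\phi$. For a node $u$, $\sigma_u(\pi)=\Pr_{\Phi\sim\mathcal{P}}[u\in\Gamma(V(\pi,\Phi),\Phi)]$, and $f^{+}_u(x_1,\dots,x_n)=\sup_\pi\{\sigma_u(\pi):\Pr_{\Phi\sim\mathcal{P}}[i\in V(\pi,\Phi)]=x_i\ \forall i\in[n]\}$. (In the paper this line arises as the set of predecessors of a node in an out-arborescence; other nodes are irrelevant.) *)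

From HB Require Import structures.
From mathcomp Require Import all_boot all_order all_algebra.
From mathcomp Require Import classical_sets reals.
Set Implicit Arguments. Unset Strict Implicit. Unset Printing Implicit Defensive.
Import Order.TTheory GRing.Theory Num.Theory.
Local Open Scope ring_scope.

(* Directed line on nodes 0..n-1 (node k here = node k+1 of the paper).
   Edge j : 'I_n.-1 is the edge from node j+1 to node j.
   A realization (live-edge graph) is phi : {ffun 'I_n.-1 -> bool}. *)

Definition realization (n : nat) := {ffun 'I_n.-1 -> bool}.

Definition reach (n : nat) (phi : realization n) (a b : nat) : bool :=
  (b <= a)%N && [forall j : 'I_n.-1, ((b <= j)%N && (j < a)%N) ==> phi j].

Definition inGamma (n : nat) (S : {set 'I_n}) (phi : realization n) (b : nat) : bool :=
  [exists u in S, reach phi u b].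

(* Full-adoption feedback of a seed set S: status of every out-going edge
   of every node reachable from some seed.  The out-going edge of node k
   (k >= 1) is edge k-1, i.e. edge j is the out-going edge of node j+1. *)
Definition revealed (n : nat) (S : {set 'I_n}) (phi : realization n) (j : 'I_n.-1) : bool :=
  inGamma S phi j.+1.

(* Observation so far: the seeds selected together with their feedback
   (a partial realization). *)
Definition observation (n : nat) : Type := ({set 'I_n} * {ffun 'I_n.-1 -> option bool})%type.

Definition observe (n : nat) (S : {set 'I_n}) (phi : realization n) : observation n :=
  (S, [ffun j => if revealed S phi j then Some (phi j) else None]).

(* A deterministic adaptive policy: next node to select, or None = stop. *)
Definition det_policy (n : nat) : Type := observation n -> option 'I_n.

Definition step (n : nat) (pol : det_policy n) (phi : realization n) (S : {set 'I_n}) : {set 'I_n} :=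
  match pol (observe S phi) with
  | Some v => v |: S
  | None => S
  end.

(* Seed set V(pol, phi).  The state only changes when a new node is added,
   so after n steps a fixed point is reached. *)
Definition seeds (n : nat) (pol : det_policy n) (phi : realization n) : {set 'I_n} :=
  iter n (step pol phi) (finset.set0).

Definition prob_real (R : realType) (n : nat) (q : 'I_n.-1 -> R) (phi : realization n) : R :=
  \prod_(j : 'I_n.-1) (if phi j then q j else 1 - q j).

Definition Pr (R : realType) (n : nat) (q : 'I_n.-1 -> R) (E : pred (realization n)) : R :=
  \sum_(phi : realization n | E phi) prob_real q phi.

(* A (randomized) adaptive policy: a finite mixture of deterministic ones. *)
Record policy (R : realType) (n : nat) := Policy {
  pol_m : nat;
  pol_w : 'I_pol_m -> R;
  pol_d : 'I_pol_m -> det_policy n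
}.
Arguments pol_w {R n} p _.
Arguments pol_d {R n} p _.

Definition valid_policy (R : realType) (n : nat) (pi : policy R n) : Prop :=
  (forall k, 0 <= pol_w pi k) /\ \sum_k pol_w pi k = 1.

Definition sel_prob (R : realType) (n : nat) (q : 'I_n.-1 -> R) (pi : policy R n) (i : 'I_n) : R :=
  \sum_k pol_w pi k * Pr q (fun phi => i \in seeds (pol_d pi k) phi).

Definition sigma (R : realType) (n : nat) (q : 'I_n.-1 -> R) (pi : policy R n) (u : nat) : R :=
  \sum_k pol_w pi k * Pr q (fun phi => inGamma (seeds (pol_d pi k) phi) phi u).

Definition fplus (R : realType) (n : nat) (q : 'I_n.-1 -> R) (u : nat) (x : 'I_n -> R) : R :=
  sup (fun s : R => exists pi : policy R n,
          [/\ valid_policy pi, (forall i, sel_prob q pi i = x i) & s = sigma q pi u]).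


Definition preach (R : realType) (n : nat) (q : 'I_n.-1 -> R) (k : nat) : R :=
  if (k < n)%N then \prod_(j : 'I_n.-1 | (j < k)%N) q j else 0.

From HB Require Import structures.
From mathcomp Require Import all_boot all_order all_algebra.
From mathcomp Require Import boolp classical_sets reals.
Import Order.TTheory GRing.Theory Num.Theory.
Local Open Scope ring_scope.

Set Implicit Arguments.
Unset Strict Implicit.
Unset Printing Implicit Defensive.

(* For a deterministic policy with first t seeds S_t, induct on t to bound the
   probability that S_t activates node 0 or that node i+1 reaches node 0 by
   sum_(j <= i) p_j Pr[j \in S_t] + p_(i+1).  This event can first occur at step
   t+1 only through the new seed j <= i reaching node 0.  No earlier seed
   reached node 0, so all of them lie above j and do not reach j: the feedback,
   hence the decision to select j, depends only on the edges above j, and is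
   independent of the edges below j all being live, which has probability p_j.
   Averaging over the mixture and taking the supremum gives the bound. *)

Section Line.

Variable n : nat.
Implicit Types (phi : realization n) (S : {set 'I_n}) (d : det_policy n).

Definition agree_from (j : nat) phi phi' :=
  forall k : 'I_n.-1, (j <= k)%N -> phi k = phi' k.

Lemma agree_from_sym j phi phi' : agree_from j phi phi' -> agree_from j phi' phi.
Proof. by move=> H k hk; rewrite H. Qed.

Lemma eq_reach phi phi' a b :
  (forall k : 'I_n.-1, (b <= k < a)%N -> phi k = phi' k) ->
  reach phi a b = reach phi' a b.
Proof.
move=> H; rewrite /reach; congr (_ && _); apply: eq_forallb => k.
by case: (boolP (b <= k < a)%N) => // /H ->.
Qed.

Lemma reach_agree j phi phi' a b :
  agree_from j phi phi' -> (j <= b)%N -> reach phi a b = reach phi' a b.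
Proof. by move=> H hb; apply: eq_reach => k /andP[hk _]; rewrite H // (leq_trans hb). Qed.

Lemma inGamma_agree j phi phi' S b :
  agree_from j phi phi' -> (j <= b)%N -> inGamma S phi b = inGamma S phi' b.
Proof. by move=> H hb; apply: eq_existsb => u; rewrite (reach_agree u H hb). Qed.

Lemma reach_refl phi a : reach phi a a.
Proof.
rewrite /reach leqnn; apply/forallP => j; apply/implyP => /andP[h1 h2].
by have := leq_ltn_trans h1 h2; rewrite ltnn.
Qed.

Lemma reach_trans phi a b c : reach phi a b -> reach phi b c -> reach phi a c.
Proof.
move=> /andP[hba /forallP H1] /andP[hcb /forallP H2].
rewrite /reach (leq_trans hcb hba); apply/forallP => j; apply/implyP => /andP[h1 h2].
case: (ltnP j b) => hj; first by move: (H2 j); rewrite h1 hj.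
by move: (H1 j); rewrite hj h2.
Qed.

Lemma reach_split phi a b c :
  (c <= b)%N -> (b <= a)%N -> reach phi a c -> reach phi a b /\ reach phi b c.
Proof.
move=> hcb hba /andP[_ /forallP H]; split.
  rewrite /reach hba; apply/forallP => j; apply/implyP => /andP[h1 h2].
  by move: (H j); rewrite (leq_trans hcb h1) h2.
rewrite /reach hcb; apply/forallP => j; apply/implyP => /andP[h1 h2].
by move: (H j); rewrite h1 (leq_trans h2 hba).
Qed.

Lemma reach_succ phi m (hm : (m < n.-1)%N) :
  reach phi m.+1 0 = reach phi m 0 && phi (Ordinal hm).
Proof.
rewrite /reach /=; apply/forallP/andP => [H|[/forallP H hk] k].
  split; last by move: (H (Ordinal hm)); rewrite /= ltnS leqnn.
  by apply/forallP => k; apply/implyP => /= hk; move: (H k); rewrite /= ltnS (ltnW hk).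
apply/implyP; rewrite /= ltnS leq_eqVlt => /orP[/eqP e|hl].
  by have -> : k = Ordinal hm by apply: val_inj.
by move: (H k); rewrite /= hl.
Qed.

Lemma reach_succ_out phi m : (n.-1 <= m)%N -> reach phi m.+1 0 = reach phi m 0.
Proof.
move=> hm; rewrite /reach !leq0n; apply: eq_forallb => k.
have hk : (k < m)%N := leq_trans (ltn_ord k) hm.
by rewrite hk ltnS (ltnW hk).
Qed.

(* The feedback of such an [S] reveals no edge below [j]. *)
Definition cut_off (j : nat) S phi : bool :=
  [forall u in S, (j < u)%N && ~~ reach phi u j].

Lemma cut_off_agree j S phi phi' :
  agree_from j phi phi' -> cut_off j S phi = cut_off j S phi'.
Proof. by move=> H; apply: eq_forallb => u; rewrite (reach_agree u H (leqnn j)). Qed.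

Lemma cut_offS j S S' phi : S \subset S' -> cut_off j S' phi -> cut_off j S phi.
Proof.
move=> hs /forallP H; apply/forallP => u; apply/implyP => hu.
by move: (H u); rewrite (fintype.subsetP hs _ hu).
Qed.

Lemma cut_off_notin j S phi b : cut_off j S phi -> (b <= j)%N -> ~~ inGamma S phi b.
Proof.
move=> /forallP H hb; apply/existsP => -[u /andP[hu hr]].
move: (H u); rewrite hu => /andP[hju].
by have [-> _] := reach_split hb (ltnW hju) hr.
Qed.

Lemma cut_off_unreached S phi v :
  ~~ inGamma S phi 0 -> reach phi v 0 -> cut_off v S phi.
Proof.
move=> hS hv; apply/forallP => u; apply/implyP => hu.
have hu0 : ~~ reach phi u 0 by apply: contra hS => hu0; apply/existsP; exists u; rewrite hu.
rewrite ltnNge; apply/andP; split.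
  by apply: contra hu0 => huv; have [_ ->] := reach_split (leq0n u) huv hv.
by apply: contra hu0 => huv; apply: reach_trans huv hv.
Qed.

Lemma observe_agree j phi phi' S :
  agree_from j phi phi' -> cut_off j S phi -> observe S phi = observe S phi'.
Proof.
move=> H hC; have hC' : cut_off j S phi' by rewrite -(cut_off_agree S H).
congr pair; apply/ffunP => k; rewrite !ffunE /revealed.
case: (leqP k.+1 j) => hk.
  by rewrite (negbTE (cut_off_notin hC hk)) (negbTE (cut_off_notin hC' hk)).
by rewrite (inGamma_agree S H (ltnW hk)) H.
Qed.

Definition seeds_at d phi t := iter t (step d phi) finset.set0.

Lemma seeds_atS d phi t : seeds_at d phi t.+1 = step d phi (seeds_at d phi t).
Proof. by []. Qed.

Lemma subset_step d phi S : S \subset step d phi S.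
Proof. by rewrite /step; case: (d _) => // v; apply: finset.subsetUr. Qed.

Lemma seeds_at_agree d j phi phi' t :
  agree_from j phi phi' -> cut_off j (seeds_at d phi t) phi ->
  seeds_at d phi t = seeds_at d phi' t.
Proof.
move=> H; elim: t => [|t IH] // hC.
have hC0 : cut_off j (seeds_at d phi t) phi by apply: cut_offS hC; apply: subset_step.
by rewrite !seeds_atS -IH // /step (observe_agree H hC0).
Qed.

End Line.

Section Probability.

Variables (R : realType) (n : nat) (q : 'I_n.-1 -> R).
Hypothesis hq : forall j, 0 <= q j <= 1.
Implicit Types (phi : realization n) (E : pred (realization n)).

Lemma prob_real_ge0 phi : 0 <= prob_real q phi.
Proof.
apply: prodr_ge0 => j _; have /andP[q0 q1] := hq j.
by case: (phi j); rewrite ?subr_ge0.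
Qed.

Lemma Pr_ge0 E : 0 <= Pr q E.
Proof. by apply: sumr_ge0 => phi _; apply: prob_real_ge0. Qed.

Lemma eq_Pr E E' : E =1 E' -> Pr q E = Pr q E'.
Proof. exact: eq_bigl. Qed.

Lemma le_Pr E E' : (forall phi, E phi -> E' phi) -> Pr q E <= Pr q E'.
Proof.
move=> H; rewrite /Pr [leLHS]big_mkcond [leRHS]big_mkcond /=.
apply: ler_sum => phi _; case: (boolP (E phi)) => [/H -> //|_].
by case: (E' phi); rewrite ?prob_real_ge0.
Qed.

Lemma PrID E E' :
  Pr q E = Pr q (fun phi => E phi && E' phi) + Pr q (fun phi => E phi && ~~ E' phi).
Proof. exact: bigID. Qed.

Lemma Pr_predT : Pr q predT = 1.
Proof.
rewrite /Pr /prob_real -(bigA_distr_bigA (fun j (b : bool) => if b then q j else 1 - q j)).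
by apply: big1 => j _; rewrite big_bool /= addrC subrK.
Qed.

Lemma Pr_union_bound (I : finType) (P : pred I) E (F : I -> pred (realization n)) :
  (forall phi, E phi -> exists2 j, P j & F j phi) ->
  Pr q E <= \sum_(j | P j) Pr q (F j).
Proof.
move=> H.
have -> : \sum_(j | P j) Pr q (F j) =
          \sum_phi \sum_(j | P j && F j phi) prob_real q phi.
  rewrite (exchange_big_dep P) /=; last by move=> phi j _ /andP[].
  by apply: eq_bigr => j hj; apply: eq_bigl => phi; rewrite hj.
rewrite /Pr [leLHS]big_mkcond /=; apply: ler_sum => phi _.
case: (boolP (E phi)) => [/H[j hj hF]|_]; last by apply: sumr_ge0 => *; apply: prob_real_ge0.
rewrite (bigD1 j) /=; last by rewrite hj hF.
by rewrite lerDl; apply: sumr_ge0 => *; apply: prob_real_ge0.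
Qed.

Definition flip_edge (k : 'I_n.-1) phi : realization n :=
  [ffun k' => if k' == k then ~~ phi k else phi k'].

Lemma flip_edgeK k : involutive (flip_edge k).
Proof.
by move=> phi; apply/ffunP => j; rewrite !ffunE; case: eqP => [->|]; rewrite ?eqxx ?negbK.
Qed.

Lemma agree_from_flip_edge M (k : 'I_n.-1) phi :
  (k < M)%N -> agree_from M phi (flip_edge k phi).
Proof.
move=> hk j hj; rewrite ffunE; case: eqP => // e.
by move: (leq_trans hk hj); rewrite e ltnn.
Qed.

(* Pairing each realization with its flip at [k] factors [q k] out. *)
Lemma Pr_edge_live (k : 'I_n.-1) E :
  (forall phi, E (flip_edge k phi) = E phi) ->
  Pr q (fun phi => E phi && phi k) = q k * Pr q E.
Proof.
move=> hE.
pose rest phi := \prod_(j | j != k) (if phi j then q j else 1 - q j).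
have hp phi : prob_real q phi = (if phi k then q k else 1 - q k) * rest phi.
  by rewrite /prob_real (bigD1 k).
have hr phi : rest (flip_edge k phi) = rest phi.
  by apply: eq_bigr => j hj; rewrite ffunE (negbTE hj).
have live : Pr q (fun phi => E phi && phi k) = q k * \sum_(phi | E phi && phi k) rest phi.
  by rewrite /Pr mulr_sumr; apply: eq_bigr => phi /andP[_ hk]; rewrite hp hk.
have dead : Pr q (fun phi => E phi && ~~ phi k) =
            (1 - q k) * \sum_(phi | E phi && phi k) rest phi.
  rewrite /Pr (reindex_inj (can_inj (flip_edgeK k))) /= mulr_sumr.
  apply: eq_big => phi; first by rewrite hE ffunE eqxx negbK.
  by rewrite ffunE eqxx negbK => /andP[_ hk]; rewrite hp hr ffunE eqxx hk.
by rewrite (PrID E (fun phi => phi k)) live dead -mulrDl addrC subrK mul1r.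
Qed.

Lemma Pr_reach_indep M E :
  (forall phi phi', agree_from M phi phi' -> E phi = E phi') ->
  forall m, (m <= M)%N ->
  Pr q (fun phi => E phi && reach phi m 0) =
  (\prod_(k : 'I_n.-1 | (k < m)%N) q k) * Pr q E.
Proof.
move=> hE; elim=> [|m IH] hm.
  by rewrite big_pred0 // mul1r; apply: eq_bigl => phi; rewrite reach_refl andbT.
have hmM : (m <= M)%N := ltnW hm.
case: (ltnP m n.-1) => hmn; last first.
  rewrite (@eq_Pr _ (fun phi => E phi && reach phi m 0)); last first.
    by move=> phi; rewrite reach_succ_out.
  rewrite IH //; congr (_ * _); apply: eq_bigl => j.
  by have hj := leq_trans (ltn_ord j) hmn; rewrite ltnS hj (ltnW hj).
pose k := Ordinal hmn.
rewrite (@eq_Pr _ (fun phi => (E phi && reach phi m 0) && phi k)); last first.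
  by move=> phi; rewrite reach_succ andbA.
rewrite Pr_edge_live; last first.
  move=> phi; congr (_ && _); first by rewrite (hE _ _ (agree_from_flip_edge phi (hm : (k < M)%N))).
  by apply: eq_reach => j /andP[_ hj]; rewrite ffunE -val_eqE /= (ltn_eqF hj).
rewrite IH // mulrA; congr (_ * _); rewrite [RHS](bigD1 k) //=; congr (_ * _).
by apply: eq_bigl => j; rewrite ltnS -val_eqE /= andbC -ltn_neqAle.
Qed.

Lemma preach_ge0 k : 0 <= preach q k.
Proof. by rewrite /preach; case: ifP => // _; apply: prodr_ge0 => j _; case/andP: (hq j). Qed.

Lemma preach_ord (j : 'I_n) : preach q j = \prod_(k : 'I_n.-1 | (k < j)%N) q k.
Proof. by rewrite /preach ltn_ord. Qed.

End Probability.

Section DeterministicPolicy.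

Variables (R : realType) (n : nat) (q : 'I_n.-1 -> R).
Hypothesis hq : forall j, 0 <= q j <= 1.
Variables (d : det_policy n) (i : 'I_n).
Implicit Types (phi : realization n) (t : nat).

Definition hit_or_reach t phi : bool :=
  inGamma (seeds_at d phi t) phi 0 || ((i.+1 < n)%N && reach phi i.+1 0).

Definition blind_pick t (j : 'I_n) phi : bool :=
  [&& j \in seeds_at d phi t.+1, j \notin seeds_at d phi t
    & cut_off j (seeds_at d phi t) phi].

Lemma blind_pick_agree t (j : 'I_n) phi phi' :
  agree_from j phi phi' -> blind_pick t j phi = blind_pick t j phi'.
Proof.
suff H phi1 phi2 : agree_from j phi1 phi2 -> blind_pick t j phi1 -> blind_pick t j phi2.
  by move=> h; apply/idP/idP; apply: H => //; apply: agree_from_sym.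
move=> h /and3P[h1 h2 h3].
have e0 := seeds_at_agree h h3.
have e1 : seeds_at d phi1 t.+1 = seeds_at d phi2 t.+1.
  by rewrite !seeds_atS -e0 /step (observe_agree h h3).
by rewrite /blind_pick -e0 -e1 h1 h2 -(cut_off_agree _ h).
Qed.

(* The seed that newly activates the target is some [j <= i] reaching it;
   since no earlier seed reached the target, none of them saw below [j]. *)
Lemma hit_or_reach_new t phi :
  hit_or_reach t.+1 phi -> ~~ hit_or_reach t phi ->
  exists2 j : 'I_n, (j <= i)%N & blind_pick t j phi && reach phi j 0.
Proof.
rewrite /hit_or_reach negb_or => hit /andP[hS hR].
have {hit} : inGamma (seeds_at d phi t.+1) phi 0.
  by case/orP: hit => // h; rewrite h in hR.
rewrite seeds_atS /step; case e: (d _) => [v|]; last by rewrite (negbTE hS).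
case/existsP=> u /andP[]; rewrite in_setU1 => /predU1P[-> hv|hu hr]; last first.
  by case/negP: hS; apply/existsP; exists u; rewrite hu.
have hvS : v \notin seeds_at d phi t.
  by apply: contra hS => hvS; apply/existsP; exists v; rewrite hvS.
have hvi : (v <= i)%N.
  rewrite leqNgt; apply: contra hR => hiv.
  have [_ ->] := reach_split (leq0n i.+1) hiv hv.
  by rewrite (leq_ltn_trans hiv (ltn_ord v)).
exists v => //; rewrite hv andbT /blind_pick seeds_atS /step e setU11 hvS.
exact: cut_off_unreached.
Qed.

Lemma Pr_hit_or_reach0 : Pr q (hit_or_reach 0) = preach q i.+1.
Proof.
have no_seed phi : inGamma (seeds_at d phi 0) phi 0 = false.
  by apply/existsP => -[u]; rewrite finset.in_set0.
rewrite /preach; case: ifP => hi; last first.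
  by apply: big_pred0 => phi; rewrite /hit_or_reach no_seed hi.
rewrite (@eq_Pr _ _ _ _ (fun phi => predT phi && reach phi i.+1 0)); last first.
  by move=> phi; rewrite /hit_or_reach no_seed hi.
by rewrite (@Pr_reach_indep _ _ _ i.+1) // Pr_predT mulr1.
Qed.

Lemma Pr_new_hit_le t :
  Pr q (fun phi => hit_or_reach t.+1 phi && ~~ hit_or_reach t phi) <=
  \sum_(j : 'I_n | (j <= i)%N) preach q j *
    Pr q (fun phi => (j \in seeds_at d phi t.+1) && (j \notin seeds_at d phi t)).
Proof.
apply: le_trans (Pr_union_bound hq (F := fun j phi => blind_pick t j phi && reach phi j 0) _) _.
  by move=> phi /andP[]; apply: hit_or_reach_new.
apply: ler_sum => j _.
rewrite (@Pr_reach_indep _ _ _ j) // -?preach_ord; last first.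
  by move=> phi phi'; apply: blind_pick_agree.
apply: ler_wpM2l; first exact: preach_ge0.
by apply: (le_Pr hq) => phi /and3P[-> -> _].
Qed.

Lemma Pr_hit_or_reach_le t :
  Pr q (hit_or_reach t) <=
  \sum_(j : 'I_n | (j <= i)%N) preach q j * Pr q (fun phi => j \in seeds_at d phi t)
  + preach q i.+1.
Proof.
elim: t => [|t IH].
  rewrite Pr_hit_or_reach0 ler_wpDl //; apply: sumr_ge0 => j _.
  by apply: mulr_ge0; [apply: preach_ge0 | apply: Pr_ge0].
have seeds_grow j : Pr q (fun phi => j \in seeds_at d phi t.+1) =
    Pr q (fun phi => j \in seeds_at d phi t) +
    Pr q (fun phi => (j \in seeds_at d phi t.+1) && (j \notin seeds_at d phi t)).
  rewrite (PrID q _ (fun phi => j \in seeds_at d phi t)); congr (_ + _).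
  apply: eq_Pr => phi; apply/andP/idP => [[]//|hj]; split=> //.
  exact: fintype.subsetP (subset_step _ _ _) _ hj.
under [X in _ <= X + _]eq_bigr do rewrite seeds_grow mulrDr.
rewrite big_split /= addrAC (PrID q (hit_or_reach t.+1) (hit_or_reach t)).
apply: lerD (Pr_new_hit_le t).
by apply: le_trans IH; apply: (le_Pr hq) => phi /andP[].
Qed.

Lemma Pr_seeds_hit_le :
  Pr q (fun phi => inGamma (seeds d phi) phi 0) <=
  \sum_(j : 'I_n | (j <= i)%N) preach q j * Pr q (fun phi => j \in seeds d phi)
  + preach q i.+1.
Proof. by apply: le_trans (Pr_hit_or_reach_le n); apply: (le_Pr hq) => phi h; apply/orP; left. Qed.

End DeterministicPolicy.

Lemma sigma_le (R : realType) n (q : 'I_n.-1 -> R) (hq : forall j, 0 <= q j <= 1)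
    (pi : policy R n) (i : 'I_n) :
  valid_policy pi ->
  sigma q pi 0 <= \sum_(j : 'I_n | (j <= i)%N) sel_prob q pi j * preach q j + preach q i.+1.
Proof.
case=> w_ge0 w_sum1.
have -> : \sum_(j : 'I_n | (j <= i)%N) sel_prob q pi j * preach q j + preach q i.+1 =
    \sum_k pol_w pi k * (\sum_(j : 'I_n | (j <= i)%N)
      preach q j * Pr q (fun phi => j \in seeds (pol_d pi k) phi) + preach q i.+1).
  under [RHS]eq_bigr do rewrite mulrDr mulr_sumr.
  rewrite big_split /= -mulr_suml w_sum1 mul1r exchange_big /=; congr (_ + _).
  apply: eq_bigr => j _; rewrite /sel_prob mulr_suml.
  by apply: eq_bigr => k _; rewrite mulrCA mulrC.
by apply: ler_sum => k _; apply: ler_wpM2l; [apply: w_ge0 | apply: Pr_seeds_hit_le].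
Qed.

Unset Implicit Arguments.

Theorem lemma6 (R : realType) (n : nat) (q : 'I_n.-1 -> R)
  (hq : forall j, 0 <= q j <= 1) (x : 'I_n -> R) (hx : forall i, 0 <= x i <= 1)
  (i : 'I_n) :
  fplus q 0 x <= \sum_(j : 'I_n | (j <= i)%N) x j * preach q j + preach q i.+1.
Proof.
rewrite /fplus; set E := (fun s : R => _).
have [->|/set0P hE] := eqVneq E set0.
  rewrite sup0 addr_ge0 ?preach_ge0 //; apply: sumr_ge0 => j _.
  by rewrite mulr_ge0 ?preach_ge0 //; case/andP: (hx j).
apply: ge_sup hE _ => _ [pi [hpi hsel ->]].
under eq_bigr => j _ do rewrite -hsel.
exact: sigma_le.
Qed.
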